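(* Let $(\mathcal{A},v)$ be a valued abelian group and $A_1,\dots,A_n$ subgroups of $\mathcal{A}$. The sum $A_1+\dots+A_n\subseteq\mathcal{A}$ is pseudo-direct if and only if the group homomorphism $f:A_1\times\dots\times A_n\to A_1+\dots+A_n$, $f(a_1,\dots,a_n)=a_1+\dots+a_n$, is immediate, where $A_1\times\dots\times A_n$ carries the minimum valuation $v(a_1,\dots,a_n)=\min_i va_i$ and $A_1+\dots+A_n$ the restriction of $v$.
   Context: A valued abelian group $(G,v)$ is an abelian group with a map $v$ onto $vG\cup\{\infty\}$ ($vG$ totally ordered, $\infty$ maximal) with $va=\infty$ iff $a=0$ and $v(a-b)\ge\min\{va,vb\}$; it is an ultrametric space via $u(a,b)=v(a-b)$. The sum $A_1+\dots+A_n$ is pseudo-direct if for every nonzero $a'\in A_1+\dots+A_n$ there are $a_i\in A_i$ with $v\sum_{i=1}^na_i=\min_iva_i$ and $v(a'-\sum_{i=1}^na_i)>va'$. For a map $g$ of ultrametric spaces, with $B(x,y)=\{z:u(x,z)\ge u(x,y)\}$, $z'$ is an attractor if for every $y$ with $z'\ne gy$ there is $z$ with $u'(gz,z')>u'(gy,z')$ and $g(B(y,z))\subseteq B(gy,z')$; $g$ is immediate if every point of the target is an attractor. *)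

From HB Require Import structures.
From mathcomp Require Import all_boot all_order all_algebra.
Set Implicit Arguments. Unset Strict Implicit. Unset Printing Implicit Defensive.
Import Order.TTheory GRing.Theory.
Local Open Scope order_scope.

(* A valued abelian group: G an abelian group (zmodType), Gam = vG u {oo}
   a totally ordered set whose top element \top plays the role of oo. *)
Definition is_valuation {d} (G : zmodType) (Gam : tOrderType d) (v : G -> Gam) :=
  (forall a : G, v a = \top <-> a = 0%R) /\
  (forall a b : G, Order.min (v a) (v b) <= v (a - b)%R).

Definition ball {d} {X : Type} {Gam : tOrderType d} (u : X -> X -> Gam) (x y : X) : X -> Prop :=
  fun z => u x y <= u x z.

Definition attractor {d} {X Y : Type} {Gam : tOrderType d}
  (DX : X -> Prop) (u : X -> X -> Gam) (DY : Y -> Prop) (u' : Y -> Y -> Gam)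
  (g : X -> Y) (z' : Y) : Prop :=
  forall y, DX y -> z' <> g y ->
    exists z, DX z /\ u' (g y) z' < u' (g z) z' /\
      (forall w, DX w -> ball u y z w -> ball u' (g y) z' (g w)).

Definition immediate {d} {X Y : Type} {Gam : tOrderType d}
  (DX : X -> Prop) (u : X -> X -> Gam) (DY : Y -> Prop) (u' : Y -> Y -> Gam)
  (g : X -> Y) : Prop :=
  forall z', DY z' -> attractor DX u DY u' g z'.

Definition is_subgroup (G : zmodType) (A : G -> Prop) :=
  A 0%R /\ forall x y, A x -> A y -> A (x - y)%R.

Definition in_prod (G : zmodType) n (A : 'I_n -> G -> Prop) (a : 'I_n -> G) :=
  forall i, A i (a i).

Definition sumf (G : zmodType) n (a : 'I_n -> G) : G := (\sum_(i < n) a i)%R.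

Definition in_sum (G : zmodType) n (A : 'I_n -> G -> Prop) (x : G) :=
  exists a, in_prod A a /\ x = sumf a.

Definition vmin {d} (G : zmodType) (Gam : tOrderType d) (v : G -> Gam) n (a : 'I_n -> G) : Gam :=
  \big[Order.min/(\top : Gam)]_(i < n) v (a i).

Definition pseudo_direct {d} (G : zmodType) (Gam : tOrderType d) (v : G -> Gam) n
  (A : 'I_n -> G -> Prop) : Prop :=
  forall a', in_sum A a' -> a' <> 0%R ->
    exists a, in_prod A a /\ v (sumf a) = vmin v a /\ v a' < v (a' - sumf a)%R.

From mathcomp Require Import all_boot all_order all_algebra.
Import Order.TTheory GRing.Theory.

(* Both directions rest on the strict triangle law: if v(a' - s) > v a' then
   v s = v a'.  Given a target point z' and a point y of the product with
   z' <> sum y, pseudo-directness applied to a' := z' - sum y yields a tuple a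
   with v(sum a) = min_i v a_i = v a' and v(a' - sum a) > v a', so y + a is a
   better approximation of z' and the ball around y of radius min_i v a_i is
   mapped into the ball around sum y of radius v a'.  Conversely, an attractor
   step from the zero tuple towards a' gives z with v(a' - sum z) > v a', and
   the ball condition, tested on z with its i-th entry erased, shows
   v z_i >= v a' for every i, whence v(sum z) = min_i v z_i. *)

Local Open Scope order_scope.

Section Valuation.
Context {d : Order.disp_t} {G : zmodType} {Gam : tOrderType d} {v : G -> Gam}.
Hypothesis hv : is_valuation v.

Lemma valuation0 : v 0%R = \top.
Proof. exact/(proj1 hv). Qed.

Lemma valuationB_ge a b c : c <= v a -> c <= v b -> c <= v (a - b)%R.
Proof. by move=> ha hb; apply: le_trans (proj2 hv a b); rewrite le_min ha hb. Qed.

Lemma valuationN x : v (- x)%R = v x.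
Proof.
have vN_ge y : v y <= v (- y)%R.
  by rewrite -sub0r; apply: valuationB_ge; rewrite ?valuation0 ?lex1.
by apply/le_anti; rewrite vN_ge -{2}(opprK x) vN_ge.
Qed.

Lemma valuationD_ge a b c : c <= v a -> c <= v b -> c <= v (a + b)%R.
Proof. by move=> ha hb; rewrite -(opprK b); apply: valuationB_ge; rewrite ?valuationN. Qed.

Lemma valuation_subC a b : v (a - b)%R = v (b - a)%R.
Proof. by rewrite -valuationN opprB. Qed.

Lemma valuation_eq_of_lt_sub x y : v x < v (x - y)%R -> v y = v x.
Proof.
move=> lt_x; have subK (a b : G) : (a - (a - b))%R = b by rewrite opprB addrC subrK.
have le_y : v x <= v y by rewrite -{1}(subK x y); apply: valuationB_ge => //; exact: ltW.
apply/le_anti; rewrite le_y andbT leNgt; apply/negP => lt_y.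
have := proj2 hv y (y - x)%R; rewrite subK valuation_subC.
by rewrite leNgt lt_min lt_y lt_x.
Qed.

Lemma vmin_ge n (a : 'I_n -> G) c : (forall i, c <= v (a i)) -> c <= vmin v a.
Proof.
move=> h; apply: (big_ind (fun y => c <= y)) => // x y hx hy.
by rewrite le_min hx hy.
Qed.

Lemma vmin_le n (a : 'I_n -> G) i : vmin v a <= v (a i).
Proof. exact: bigmin_le. Qed.

Lemma vminN n (a : 'I_n -> G) : vmin v (fun i => - a i)%R = vmin v a.
Proof. by apply: eq_bigr => i _; rewrite valuationN. Qed.

Lemma vmin_le_sumf n (a : 'I_n -> G) : vmin v a <= v (sumf a).
Proof.
apply: (big_ind (fun y => vmin v a <= v y)).
- by rewrite valuation0 lex1.
- by move=> x y; apply: valuationD_ge.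
- by move=> i _; apply: vmin_le.
Qed.

End Valuation.

Section Subgroups.
Context {G : zmodType} {n : nat} {A : 'I_n -> G -> Prop}.
Hypothesis hA : forall i, is_subgroup (A i).

Lemma in_prod0 : in_prod A (fun _ => 0%R).
Proof. by move=> i; case: (hA i). Qed.

Lemma in_prodB a b : in_prod A a -> in_prod A b -> in_prod A (fun i => a i - b i)%R.
Proof. by move=> ha hb i; apply: (proj2 (hA i)). Qed.

Lemma in_prodD a b : in_prod A a -> in_prod A b -> in_prod A (fun i => a i + b i)%R.
Proof.
move=> ha hb; have hNb : in_prod A (fun i => 0 - b i)%R.
  by apply: in_prodB => //; exact: in_prod0.
move=> i; have -> : (a i + b i = a i - (0 - b i))%R by rewrite sub0r opprK.
exact: in_prodB ha hNb i.
Qed.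

End Subgroups.

Section Sums.
Context {G : zmodType} {n : nat}.

Lemma sumf0 : sumf (fun _ : 'I_n => 0%R : G) = 0%R.
Proof. exact: big1. Qed.

Lemma sumfB (a b : 'I_n -> G) : sumf (fun i => a i - b i)%R = (sumf a - sumf b)%R.
Proof. exact: sumrB. Qed.

Lemma sumfD (a b : 'I_n -> G) : sumf (fun i => a i + b i)%R = (sumf a + sumf b)%R.
Proof. exact: big_split. Qed.

Lemma sumf_sub_erase (a : 'I_n -> G) i :
  (sumf a - sumf (fun j => if j == i then 0 else a j))%R = a i.
Proof.
rewrite /sumf (bigD1 i) //= [X in (_ - X)%R](bigD1 i) //= eqxx add0r.
by rewrite [X in (_ - X)%R](eq_bigr a) ?addrK // => j /negbTE ->.
Qed.

End Sums.

Section PseudoDirectImmediate.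
Context {d : Order.disp_t} {G : zmodType} {Gam : tOrderType d} {v : G -> Gam}.
Context {n : nat} {A : 'I_n -> G -> Prop}.
Hypothesis hv : is_valuation v.
Hypothesis hA : forall i, is_subgroup (A i).

Lemma pseudo_direct_immediate : pseudo_direct v A ->
  immediate (in_prod A) (fun a b => vmin v (fun i => (a i - b i)%R))
            (in_sum A) (fun x y => v (x - y)%R) (@sumf G n).
Proof.
move=> pd _ [b [hb ->]] y hy ne_y.
set a' := (sumf b - sumf y)%R.
have a'_sum : in_sum A a'.
  by exists (fun i => b i - y i)%R; rewrite sumfB; split => //; exact: in_prodB.
have a'_neq0 : a' <> 0%R by move/eqP; rewrite subr_eq0 => /eqP.
have [a [ha [v_suma lt_a']]] := pd _ a'_sum a'_neq0.
have v_a' : v (sumf y - sumf b)%R = v a' by rewrite valuation_subC.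
exists (fun i => y i + a i)%R; split; first exact: in_prodD.
split.
  rewrite v_a' sumfD.
  have -> : (sumf y + sumf a - sumf b = - (a' - sumf a))%R.
    by rewrite /a' !opprB addrA [(sumf y + _)%R]addrC.
  by rewrite valuationN.
move=> w hw; rewrite /ball v_a' -(valuation_eq_of_lt_sub hv _ _ lt_a') v_suma.
have -> : vmin v (fun i => y i - (y i + a i))%R = vmin v a.
  by rewrite -[RHS](vminN hv); apply: eq_bigr => i _; rewrite opprD addrA subrr add0r.
by move/le_trans; apply; rewrite -sumfB; exact: vmin_le_sumf.
Qed.

Lemma immediate_pseudo_direct :
  immediate (in_prod A) (fun a b => vmin v (fun i => (a i - b i)%R))
            (in_sum A) (fun x y => v (x - y)%R) (@sumf G n) ->
  pseudo_direct v A.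
Proof.
move=> im a' a'_sum a'_neq0.
have [|z [hz [lt_z ball_z]]] := im a' a'_sum _ (in_prod0 hA); first by rewrite sumf0.
rewrite sumf0 sub0r (valuationN hv) (valuation_subC hv) in lt_z.
have v_sumz := valuation_eq_of_lt_sub hv _ _ lt_z.
exists z; split=> //; split=> //.
apply/le_anti; rewrite (vmin_le_sumf hv) andbT v_sumz; apply: vmin_ge => i.
set w := fun j => if j == i then 0%R else z j.
have hw : in_prod A w by move=> j; rewrite /w; case: ifP => // _; exact: in_prod0.
have le_w : v a' <= v (sumf w).
  have := ball_z w hw; rewrite /ball sumf0 !sub0r !(valuationN hv); apply.
  apply: vmin_ge => j; rewrite /w; case: ifP => _.
    by rewrite subrr (valuation0 hv) lex1.
  exact: vmin_le.
by rewrite -(sumf_sub_erase z i); apply: (valuationB_ge hv); rewrite ?v_sumz.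
Qed.

End PseudoDirectImmediate.

Theorem proposition64 {d} (G : zmodType) (Gam : tOrderType d) (v : G -> Gam)
  (n : nat) (A : 'I_n -> G -> Prop) :
  is_valuation v ->
  (forall i, is_subgroup (A i)) ->
  pseudo_direct v A <->
  immediate (in_prod A) (fun a b => vmin v (fun i => (a i - b i)%R))
            (in_sum A) (fun x y => v (x - y)%R)
            (@sumf G n).
Proof.
move=> hv hA; split; [exact: pseudo_direct_immediate | exact: immediate_pseudo_direct].
Qed.
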